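(* Let $\alpha>0$, $p=\frac{\alpha}{1+\alpha}$, and $q\in(p,1)$. Let $S_t=\sum_{i=1}^t\zeta_i$ where $\zeta_1,\zeta_2,\dots$ are i.i.d. with $\mathbb P(\zeta_i=1)=1-q$ and $\mathbb P(\zeta_i=-1/\alpha)=q$. Then $$\mathbb P\Big(\max_{t\ge1}S_t\le 0\Big)\ \le\ q\min\Big\{\frac{2(q-p)}{p(1-q)},\,1\Big\}.$$ *)

From HB Require Import structures.
From mathcomp Require Import all_boot all_order all_algebra.
From mathcomp Require Import all_classical all_reals all_analysis.
Set Implicit Arguments. Unset Strict Implicit. Unset Printing Implicit Defensive.
Import Order.TTheory GRing.Theory Num.Theory.
Local Open Scope classical_set_scope.
Local Open Scope ring_scope.

Definition mutually_independent d (T : measurableType d) (R : realType)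
  (P : probability T R) (X : nat -> {RV P >-> R}) : Prop :=
  forall (I : seq nat) (B : nat -> set R),
    uniq I -> (forall i, measurable (B i)) ->
    P (\bigcap_(i in [set j | j \in I]) (X i @^-1` B i))
    = (\prod_(i <- I) P (X i @^-1` B i))%E.

From HB Require Import structures.
From mathcomp Require Import all_boot all_order all_algebra.
From mathcomp Require Import all_classical all_reals all_analysis.
From mathcomp Require Import ring lra.
Import Order.TTheory GRing.Theory Num.Theory.
Import numFieldNormedType.Exports.
Set Implicit Arguments. Unset Strict Implicit. Unset Printing Implicit Defensive.
Local Open Scope classical_set_scope.
Local Open Scope ring_scope.

(* Write a := 1/alpha, so each step of the walk is +1 with probability 1 - q
   and -a with probability q, and let A be the event that S_t <= 0 for all
   t >= 1.  The file proceeds in four parts.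
   - An elementary inequality: e^(-ps) <= 1 - pc - p(1-p)c^2/2 with
     c = 1 - e^(-s), for 0 < p <= 1 and s >= 0 (tilt_gap_ge0).  With
     p = alpha/(1+alpha) and b = 2(q-p)/(p(1-q)) < 1 it yields a tilt theta
     with e^(-theta(1+a)) = 1 - b and rho = E[e^(theta zeta)] > 1.
   - The finite-horizon survival probability stay_prob q a n v of the walk
     started at v, defined by its one-step recursion.  An induction playing
     the role of optional stopping for e^(theta S_t) rho^(-t) gives
       stay_prob q a n.+1 0 <= q (1 - e^(-theta (1 + a)) + rho^-n),
     hence in the limit the bound q b; for b >= 1 the bound q is immediate.
   - Splitting A along the first n steps into cylinders (plus the null set
     where some step is neither +1 nor -a) and using independence gives
     P(A) <= stay_prob q a n 0 for every n.
   - The theorem combines the last two parts. *)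

(* The difference of the two sides of e^(-ps) <= 1 - pc - p(1-p)c^2/2,
   c = 1 - e^(-s); it vanishes at s = 0 and is nondecreasing. *)
Definition tilt_gap {R : realType} (p s : R) : R :=
  1 - p * (1 - expR (- s)) - p * (1 - p) * (1 - expR (- s)) ^+ 2 / 2
  - expR (- (p * s)).

Lemma is_derive_tilt_gap (R : realType) (p x : R) :
  is_derive x 1 (tilt_gap p)
    (p * (expR (- (p * x)) - expR (- x) - (1 - p) * (1 - expR (- x)) * expR (- x))).
Proof.
have dE : is_derive x 1 (fun s : R => expR (- s)) (- expR (- x)).
  have := @is_derive1_comp R expR (fun s => - s) x (expR (- x)) (-1) _ _.
  by rewrite mulrN1; apply.
have dpx : is_derive x 1 (fun s : R => - (p * s)) (- p).
  apply: is_deriveN.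
  by have := @is_deriveZ R R R id p x 1 1; rewrite scaler1; apply.
have dEp : is_derive x 1 (fun s : R => expR (- (p * s))) (- p * expR (- (p * x))).
  have := @is_derive1_comp R expR (fun s => - (p * s)) x _ _ (is_derive_expR _) dpx.
  by rewrite mulrC; apply.
pose E := fun s : R => expR (- s).
pose Ep := fun s : R => expR (- (p * s)).
have -> : tilt_gap p =
    cst 1 - p \*: (cst 1 - E) - (p * (1 - p) / 2) \*: (cst 1 - E) ^+ 2 - Ep.
  apply/funext => s; rewrite /tilt_gap /E /Ep /= !fctE /=.
  by rewrite /GRing.scale /=; ring.
apply: is_derive_eq.
by rewrite /E /= /GRing.scale /= /cst expr1 !fctE /=; field.
Qed.

Lemma tilt_gap_ge0 (R : realType) (p s : R) :
  0 < p -> p <= 1 -> 0 <= s -> 0 <= tilt_gap p s.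
Proof.
move=> p0 p1 s0.
have -> : 0 = tilt_gap p 0.
  by rewrite /tilt_gap oppr0 mulr0 oppr0 expR0 subrr mulr0 expr0n /= mulr0
    mul0r !subr0 subrr.
apply: (@ger0_derive1_ndecr R (tilt_gap p) 0 s) => //.
- move=> x; rewrite in_itv /= => /andP[x0 _].
  rewrite derive1E (@derive_val _ _ _ _ _ _ _ (@is_derive_tilt_gap R p x)).
  (* e^(-px) = e^(-x) e^((1-p)x) and e^y >= 1 + y make the derivative >= 0 *)
  have -> : expR (- (p * x)) = expR (- x) * expR ((1 - p) * x).
    by rewrite -expRD; congr expR; ring.
  have e1 := expR_ge1Dx ((1 - p) * x).
  have e0 := expR_gt0 (- x).
  have lin : (1 - p) * (1 - expR (- x)) <= (1 - p) * x.
    by apply: ler_wpM2l; have := expR_ge1Dx (- x); lra.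
  apply: mulr_ge0; first exact: ltW.
  have : 0 <= expR (- x) * (expR ((1 - p) * x) - 1 - (1 - p) * (1 - expR (- x))).
    by apply: mulr_ge0; [exact: ltW | lra].
  by nra.
- apply: continuous_subspaceT => x.
  apply/differentiable_continuous/derivable1_diffP.
  by case: (@is_derive_tilt_gap R p x).
Qed.

(* One takes theta = p s with e^(-s) = 1-b. *)
Lemma exists_tilt (R : realType) (alpha q p b : R) :
  0 < alpha -> p = alpha / (1 + alpha) -> p < q -> q < 1 ->
  b = 2 * (q - p) / (p * (1 - q)) -> b < 1 ->
  exists th : R, [/\ 0 <= th,
    1 < (1 - q) * expR th + q * expR (- (alpha^-1 * th)) &
    expR (- (th * (1 + alpha^-1))) = 1 - b].
Proof.
move=> a0 hp pq q1 hb b1; subst p b; set p := alpha / (1 + alpha) in pq b1 *.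
set b := 2 * (q - p) / (p * (1 - q)) in b1 *.
have p0 : 0 < p by rewrite divr_gt0 //; lra.
have p1 : p < 1 by lra.
have ap : alpha^-1 * p = 1 - p by rewrite /p; field; lra.
have pa : p * (1 + alpha^-1) = 1 by rewrite /p; field; lra.
have b0 : 0 < b by rewrite /b; apply: divr_gt0; nra.
(* the quadratic term of the inequality beats the linear deficit q b - p b *)
have key : q * b < p * b + p * (1 - p) * b ^+ 2 / 2.
  have -> : p * (1 - p) * b ^+ 2 / 2 = b * ((1 - p) * ((q - p) / (1 - q))).
    by rewrite /b; field; repeat split; lra.
  have : q - p < (1 - p) * ((q - p) / (1 - q)).
    have -> : (1 - p) * ((q - p) / (1 - q)) = (q - p) + (q - p) * ((q - p) / (1 - q)).
      by field; lra.
    have : 0 < (q - p) / (1 - q) by apply: divr_gt0; lra.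
    by nra.
  by nra.
pose s := - ln (1 - b).
have Es : expR (- s) = 1 - b by rewrite /s opprK lnK // posrE; lra.
have s0 : 0 <= s by rewrite /s oppr_ge0 ln_le0 //; lra.
exists (p * s); split; first exact: mulr_ge0 (ltW p0) s0.
- have G := @tilt_gap_ge0 R p s p0 (ltW p1) s0.
  rewrite /tilt_gap Es (_ : 1 - (1 - b) = b) in G; last by ring.
  have -> : expR (- (alpha^-1 * (p * s))) = expR (- s) * expR (p * s).
    by rewrite -expRD mulrA ap; congr expR; ring.
  have eY : expR (p * s) * expR (- (p * s)) = 1 by rewrite -expRD subrr expR0.
  have := expR_gt0 (p * s); have := expR_gt0 (- (p * s)).
  by rewrite Es; nra.
- by rewrite -mulrA (mulrC s) mulrA pa mul1r.
Qed.

(* stay_prob q a n v: probability that the walk started at v, with steps +1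
   (probability 1 - q) and -a (probability q), is <= 0 at times 0, ..., n. *)
Fixpoint stay_prob {R : realType} (q a : R) (n : nat) (v : R) : R :=
  if n is m.+1 then
    (if v <= 0 then (1 - q) * stay_prob q a m (v + 1) + q * stay_prob q a m (v - a)
     else 0)
  else (if v <= 0 then 1 else 0).

Lemma stay_prob_ge0_le1 (R : realType) (q a : R) n v :
  0 <= q <= 1 -> 0 <= stay_prob q a n v <= 1.
Proof.
move=> /andP[q0 q1]; elim: n v => [|n IH] v /=.
  by case: ifP => _; rewrite ?lexx ?ler01.
case: ifP => _; last by rewrite lexx ler01.
have /andP[? ?] := IH (v + 1); have /andP[? ?] := IH (v - a).
by apply/andP; split; nra.
Qed.

Lemma stay_prob_pos (R : realType) (q a : R) n v : 0 < v -> stay_prob q a n v = 0.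
Proof. by move=> v0; case: n => [|n] /=; rewrite leNgt v0. Qed.

(* Surviving the first step from 0 requires the step -a. *)
Lemma stay_prob_first_step (R : realType) (q a : R) n :
  stay_prob q a n.+1 0 = q * stay_prob q a n (- a).
Proof. by rewrite /= lexx stay_prob_pos ?add0r ?ltr01 // mulr0 add0r ?sub0r. Qed.

Lemma expR_tilt_step (R : realType) (q a th v : R) :
  expR (th * v) * ((1 - q) * expR th + q * expR (- (a * th)))
  = (1 - q) * expR (th * (v + 1)) + q * expR (th * (v - a)).
Proof.
have -> : expR (th * (v + 1)) = expR (th * v) * expR th.
  by rewrite -expRD; congr expR; ring.
have -> : expR (th * (v - a)) = expR (th * v) * expR (- (a * th)).
  by rewrite -expRD; congr expR; ring.
by ring.
Qed.

(* Optional stopping for the supermartingale e^(theta S_t) rho^(-t), written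
   as an induction on the recursion: from v <= 1 the walk either exceeds 0
   (at a level <= 1, weight e^theta) or survives n steps (weight rho^-n). *)
Lemma stay_prob_tilt (R : realType) (q a th rho : R) :
  0 <= q <= 1 -> 0 <= a -> 0 <= th -> 1 <= rho ->
  rho = (1 - q) * expR th + q * expR (- (a * th)) ->
  forall n v, v <= 1 ->
  expR (th * v) <= expR th * (1 - stay_prob q a n v) + rho^-1 ^+ n * stay_prob q a n v.
Proof.
move=> qb a0 th0 rho1 erho.
have /andP[q0 q1] := qb.
have r0 : 0 < rho^-1 by rewrite invr_gt0; lra.
have r1 : rho^-1 <= 1 by rewrite invr_le1 // ?unitfE; lra.
have exit_bound v : 0 < v -> v <= 1 -> expR (th * v) <= expR th.
  by move=> v0 v1; rewrite ler_expR; nra.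
elim=> [|n IH] v v1 /=; case: ifPn => [v0|];
  try by rewrite -ltNge subr0 mulr1 mulr0 addr0 => /exit_bound; apply.
  by rewrite subrr mulr0 add0r expr0 mulr1 -expR0 ler_expR; nra.
have /andP[X10 X11] := stay_prob_ge0_le1 a n (v + 1) qb.
have /andP[X20 X21] := stay_prob_ge0_le1 a n (v - a) qb.
set X1 := stay_prob q a n (v + 1) in X10 X11 *.
set X2 := stay_prob q a n (v - a) in X20 X21 *.
set F := (1 - q) * X1 + q * X2.
have F0 : 0 <= F by rewrite /F; nra.
have F1 : F <= 1 by rewrite /F; nra.
set r := rho^-1.
(* one step of the tilted walk multiplies e^(theta v) by rho on average *)
have step : expR (th * v) * rho <= expR th * (1 - F) + r ^+ n * F.
  rewrite erho expR_tilt_step.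
  have -> : expR th * (1 - F) + r ^+ n * F =
      (1 - q) * (expR th * (1 - X1) + r ^+ n * X1)
      + q * (expR th * (1 - X2) + r ^+ n * X2) by rewrite /F; ring.
  apply: lerD; apply: ler_wpM2l; rewrite ?subr_ge0 //; apply: IH; lra.
have -> : expR (th * v) = (expR (th * v) * rho) * r.
  by rewrite -mulrA mulrV ?mulr1 // unitfE; lra.
apply: le_trans (ler_wpM2r (ltW r0) step) _.
have rn0 : 0 <= r ^+ n by rewrite exprn_ge0 // ltW.
have -> : expR th * (1 - F) + r ^+ n.+1 * F =
    expR th * (1 - F) * 1 + r ^+ n * F * r by rewrite exprSr; ring.
rewrite mulrDl lerD2r; apply: ler_wpM2l => //.
by apply: mulr_ge0; [exact/ltW/expR_gt0 | lra].
Qed.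

(* From 0, survival forces a first step -a; the tilt bound at -a then gives
   the survival probability up to the geometric error rho^-n. *)
Lemma stay_prob_from0 (R : realType) (q a th rho : R) :
  0 <= q <= 1 -> 0 <= a -> 0 <= th -> 1 <= rho ->
  rho = (1 - q) * expR th + q * expR (- (a * th)) ->
  forall n, stay_prob q a n.+1 0 <= q * ((1 - expR (- (th * (1 + a)))) + rho^-1 ^+ n).
Proof.
move=> qb a0 th0 rho1 erho n.
have h := stay_prob_tilt qb a0 th0 rho1 erho n (ltac:(lra) : - a <= 1).
rewrite stay_prob_first_step.
have /andP[q0 _] := qb.
apply: ler_wpM2l => //.
have /andP[X0 X1] := stay_prob_ge0_le1 a n (- a) qb.
move: h X0 X1; set X := stay_prob q a n (- a); set r := rho^-1 ^+ n => h X0 X1.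
have r0 : 0 <= r by rewrite exprn_ge0 // invr_ge0; lra.
have y0 := expR_gt0 (- th).
have y1 : expR (- th) <= 1 by rewrite -expR0 ler_expR; lra.
have -> : expR (- (th * (1 + a))) = expR (th * (- a)) * expR (- th).
  by rewrite -expRD; congr expR; ring.
have := ler_wpM2l (ltW y0) h.
have -> : expR (- th) * (expR th * (1 - X) + r * X) = (1 - X) + expR (- th) * r * X.
  by rewrite mulrDr mulrA -expRD addNr expR0 mul1r mulrA.
have : expR (- th) * r * X <= expR (- th) * r.
  by rewrite -[leRHS]mulr1 ler_wpM2l // mulr_ge0 // ltW.
have : expR (- th) * r <= r by rewrite -[leRHS]mul1r ler_wpM2r.
by rewrite (mulrC (expR _)); lra.
Qed.

Lemma expr_lt_eventually (R : realType) (r e : R) :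
  0 <= r < 1 -> 0 < e -> exists n, r ^+ n < e.
Proof.
move=> /andP[r0 r1] e0.
have /cvgrPdist_lt/(_ e e0) [N _ HN] := @cvg_expr R r ltac:(by rewrite ger0_norm).
exists N; have := HN N (leqnn N).
by rewrite /= sub0r normrN ger0_norm ?exprn_ge0.
Qed.

Lemma stay_prob_limit_bound (R : realType) (alpha q x : R) :
  let p := alpha / (1 + alpha) in
  0 < alpha -> p < q -> q < 1 ->
  (forall n, x <= stay_prob q alpha^-1 n 0) ->
  x <= q * Num.min (2 * (q - p) / (p * (1 - q))) 1.
Proof.
move=> p a0 pq q1 le_x; set b := 2 * (q - p) / (p * (1 - q)).
have p0 : 0 < p by rewrite divr_gt0 //; lra.
have q0 : 0 < q by lra.
have qb : 0 <= q <= 1 by apply/andP; split; lra.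
have ai0 : 0 <= alpha^-1 by rewrite invr_ge0 ltW.
case: (ltP b 1) => [b1|b1]; last first.
  rewrite mulr1; apply: le_trans (le_x 1%N) _.
  rewrite stay_prob_first_step -[leRHS]mulr1 ler_wpM2l ?(ltW q0) //.
  by have /andP[] := stay_prob_ge0_le1 alpha^-1 0 (- alpha^-1) qb.
have [th [th0 rho1 eth]] := exists_tilt a0 erefl pq q1 erefl b1.
set rho := (1 - q) * expR th + q * expR _ in rho1.
have hf n := stay_prob_from0 qb ai0 th0 (ltW rho1) erefl n.
apply/ler_addgt0Pr => e e0.
have r01 : 0 <= rho^-1 < 1.
  by rewrite invr_ge0 invf_lt1 ?(ltW (lt_trans ltr01 rho1)) //; lra.
have [n hn] := expr_lt_eventually r01 (divr_gt0 e0 q0).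
apply: le_trans (le_x n.+1) (le_trans (hf n) _).
rewrite eth (_ : 1 - (1 - b) = b); last by ring.
rewrite mulrDr lerD2l.
have : q * rho^-1 ^+ n <= q * (e / q) by apply: ler_wpM2l; [lra | exact: ltW].
by rewrite mulrCA mulfV ?mulr1 // gt_eqF.
Qed.

(* Finite paths of the walk, coded by booleans (true = step +1). *)
Definition step_val {R : realType} (a : R) (b : bool) : R := if b then 1 else - a.
Definition step_prob {R : realType} (q : R) (b : bool) : R := if b then 1 - q else q.

Fixpoint stays_nonpos {R : realType} (a v : R) (s : seq bool) : bool :=
  if s is b :: s' then (v <= 0) && stays_nonpos a (v + step_val a b) s'
  else v <= 0.

Fixpoint bool_paths (n : nat) : seq (seq bool) :=
  if n is m.+1 then map (cons true) (bool_paths m) ++ map (cons false) (bool_paths m)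
  else [:: [::]].

Lemma mem_bool_paths (s : seq bool) : s \in bool_paths (size s).
Proof.
elim: s => [|b s IH] //=.
rewrite mem_cat; case: b.
  by rewrite (map_f (cons true) IH).
by rewrite (map_f (cons false) IH) orbT.
Qed.

Lemma sum_stays_nonpos (R : realType) (q a : R) n v :
  \sum_(s <- bool_paths n | stays_nonpos a v s) \prod_(b <- s) step_prob q b
  = stay_prob q a n v.
Proof.
elim: n v => [|n IH] v /=.
  by rewrite big_cons big_nil /=; case: ifP; rewrite ?big_nil ?addr0.
rewrite big_cat !big_map /=; case: ifPn => hv /=; last by rewrite !big_pred0 ?addr0.
rewrite -(IH (v + 1)) -(IH (v - a)) !big_distrr /=.
by congr (_ + _); apply: eq_bigr => s _; rewrite big_cons.
Qed.

Lemma stays_nonpos_partial_sums (R : realType) (a v : R) (s : seq bool) :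
  (forall t, (t <= size s)%N -> v + \sum_(i < t) step_val a (nth false s i) <= 0) ->
  stays_nonpos a v s.
Proof.
elim: s v => [|b s IH] v le0 /=.
  by have := le0 0%N (leqnn _); rewrite big_ord0 addr0.
apply/andP; split; first by have := le0 0%N (leq0n _); rewrite big_ord0 addr0.
apply: IH => t ht; have := le0 t.+1 ht.
by rewrite big_ord_recl /= addrA.
Qed.

Lemma measure_bigsetU_seq_le d (T : measurableType d) (R : realType)
    (mu : {measure set T -> \bar R}) (I : Type) (r : seq I) (F : I -> set T) :
  (forall i, measurable (F i)) ->
  (mu (\big[setU/set0]_(i <- r) F i) <= \sum_(i <- r) mu (F i))%E.
Proof.
move=> mF; elim: r => [|i r IH]; first by rewrite !big_nil measure0.
rewrite !big_cons; apply: le_trans (measureU2 _ _ _) _ => //.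
  by apply: bigsetU_measurable => j _.
exact: leeD.
Qed.

Section walk_events.
Context d (T : measurableType d) (R : realType) (P : probability T R).
Variables (a q : R) (zeta : nat -> {RV P >-> R}).
Hypothesis a_gt0 : 0 < a.
Hypothesis zeta_indep : mutually_independent zeta.
Hypothesis zeta_up : forall i, P (zeta i @^-1` [set 1]) = (1 - q)%:E.
Hypothesis zeta_down : forall i, P (zeta i @^-1` [set - a]) = q%:E.

Definition never_positive : set T :=
  [set x | forall t : nat, (1 <= t)%N -> \sum_(i < t) zeta i x <= 0].

Lemma measurable_never_positive : measurable never_positive.
Proof.
have -> : never_positive =
    \bigcap_t [set x | (1 <= t)%N -> \sum_(i < t) zeta i x <= 0].
  by apply/seteqP; split => x /= H t; [move=> _; exact: H | exact: (H t I)].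
apply: bigcapT_measurable => -[|t].
  by rewrite (_ : [set x | _] = setT); [exact: measurableT | apply/seteqP].
have -> : [set x | (1 <= t.+1)%N -> \sum_(i < t.+1) zeta i x <= 0] =
    setT `&` (fun x => \sum_(i < t.+1) zeta i x) @^-1` `]-oo, 0]%classic.
  apply/seteqP; split => x /=; rewrite in_itv /=; last by case.
  by move=> H; split => //; exact: H.
by apply: measurable_sum => //; exact: measurable_itv.
Qed.

Definition cylinder (s : seq bool) : set T :=
  \bigcap_(i in [set j | j \in iota 0 (size s)])
    zeta i @^-1` [set step_val a (nth false s i)].

Lemma measurable_cylinder s : measurable (cylinder s).
Proof. by apply: bigcap_measurableType => i _; exact: measurable_funPTI. Qed.

Lemma cylinder_prob s : P (cylinder s) = (\prod_(b <- s) step_prob q b)%:E.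
Proof.
rewrite /cylinder zeta_indep; [|exact: iota_uniq|by move=> i; exact: measurable_set1].
rewrite (big_nth false) /index_iota subn0 -prodEFin.
by apply: eq_bigr => i _; case: (nth false s i); [exact: zeta_up | exact: zeta_down].
Qed.

Definition off_support (i : nat) : set T :=
  ~` (zeta i @^-1` [set 1] `|` zeta i @^-1` [set - a]).

Lemma measurable_off_support i : measurable (off_support i).
Proof. by apply/measurableC/measurableU; exact: measurable_funPTI. Qed.

Lemma off_support_null i : P (off_support i) = 0%E.
Proof.
have disj : zeta i @^-1` [set 1] `&` zeta i @^-1` [set - a] = set0.
  by apply/seteqP; split => x //= [->] ha; move: a_gt0; rewrite -oppr_lt0 -ha ltr10.
rewrite probability_setC; last by apply: measurableU; exact: measurable_funPTI.
have total : (P (zeta i @^-1` [set 1%R]) + P (zeta i @^-1` [set (- a)%R]) = 1)%E.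
  by rewrite zeta_up zeta_down -EFinD subrK.
by rewrite measureU ?total ?subee //; exact: measurable_funPTI.
Qed.

Lemma never_positive_cover m :
  never_positive `<=`
    \big[setU/set0]_(s <- [seq s <- bool_paths m | stays_nonpos a 0 s]) cylinder s
    `|` \big[setU/set0]_(i <- iota 0 m) off_support i.
Proof.
move=> x Ax.
case: (pselect (exists2 i, (i < m)%N & off_support i x)) => [[i im offx] | on_support].
  by right; rewrite -bigcup_seq; exists i => //=; rewrite mem_iota.
left; rewrite -bigcup_seq.
pose s := [seq zeta i x == 1 | i <- iota 0 m].
have size_s : size s = m by rewrite size_map size_iota.
have steps i : (i < m)%N -> step_val a (nth false s i) = zeta i x.
  move=> im; rewrite (nth_map 0%N) ?size_iota // nth_iota // add0n /step_val.
  case: eqP => // ne1; apply: contra_notP on_support => ne.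
  by exists i => // -[/ne1 | /esym /ne].
exists s => /=.
  rewrite mem_filter -size_s mem_bool_paths andbT.
  apply: stays_nonpos_partial_sums => -[|t]; rewrite size_s add0r => tm.
    by rewrite big_ord0.
  under eq_bigr => i _ do rewrite steps ?(leq_trans (ltn_ord i) tm) //.
  exact: Ax.
by move=> i; rewrite /= size_s mem_iota add0n => im; rewrite /preimage /= steps.
Qed.

Lemma never_positive_le_stay_prob m :
  (P never_positive <= (stay_prob q a m 0)%:E)%E.
Proof.
have := never_positive_cover m.
set Ucyl := \big[setU/set0]_(s <- _) cylinder s.
set Uoff := \big[setU/set0]_(i <- iota 0 m) off_support i => cover.
have mUcyl : measurable Ucyl.
  by apply: bigsetU_measurable => s _; exact: measurable_cylinder.
have mUoff : measurable Uoff.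
  by apply: bigsetU_measurable => i _; exact: measurable_off_support.
have Uoff0 : P Uoff = 0%E.
  apply/eqP; rewrite eq_le measure_ge0 andbT.
  apply: le_trans (measure_bigsetU_seq_le _ _ measurable_off_support) _.
  by rewrite big1 // => i _; exact: off_support_null.
have le_cyl : (P never_positive <= P Ucyl)%E.
  rewrite -(measureU0 mUcyl mUoff Uoff0).
  apply: le_measure cover; apply: mem_set; last exact: measurableU.
  exact: measurable_never_positive.
apply: le_trans le_cyl (le_trans (measure_bigsetU_seq_le _ _ measurable_cylinder) _).
rewrite -sum_stays_nonpos -sumEFin big_filter.
by apply: lee_sum => s _; rewrite -cylinder_prob.
Qed.

End walk_events.

Theorem lemma3 (d : measure_display) (T : measurableType d) (R : realType)
  (P : probability T R) (alpha q : R) (zeta : nat -> {RV P >-> R}) :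
  0 < alpha ->
  alpha / (1 + alpha) < q -> q < 1 ->
  @mutually_independent _ _ _ P zeta ->
  (forall i, P (zeta i @^-1` [set 1]) = (1 - q)%:E) ->
  (forall i, P (zeta i @^-1` [set - alpha^-1]) = q%:E) ->
  let p := alpha / (1 + alpha) in
  (P [set x | forall t : nat, (1 <= t)%N -> (\sum_(i < t) zeta i x <= 0)%R]
   <= (q * Num.min (2 * (q - p) / (p * (1 - q))) 1)%:E)%E.
Proof.
move=> a0 pq q1 indep up down; cbv zeta; rewrite -/(never_positive zeta).
have ai0 : 0 < alpha^-1 by rewrite invr_gt0.
have bound m := never_positive_le_stay_prob ai0 indep up down m.
have finite : P (never_positive zeta) \is a fin_num.
  by rewrite ge0_fin_numE ?measure_ge0 // (le_lt_trans (bound 0%N)) ?ltry.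
rewrite -(fineK finite) lee_fin.
apply: stay_prob_limit_bound => // n.
by rewrite -lee_fin fineK //; exact: bound.
Qed.
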